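(* Let $k$ be a field, $A=kQ_A/I_A$ a monomial algebra, and $B$ the algebra obtained from $A$ by gluing a source vertex $e_1$ and a sink vertex $e_n$ of $Q_A$ (distinct, non-isolated). Then $\mathrm{Ker}(\delta^1_A)\cong\mathrm{Ker}(\delta^1_B)$ as Lie algebras, except in the case that $\mathrm{char}(k)=2$ and the gluing produces a block of $B$ isomorphic to $k[x]/(x^2)$.
   Context: Monomial algebra: $A=kQ_A/I_A$, $Q_A$ finite quiver, $I_A$ admissible, generated by a minimal set $Z_A$ of paths of length $\ge2$; $\mathcal B_A$: paths (including trivial ones) avoiding elements of $Z_A$ as subpaths. Source: no incoming arrows; sink: no outgoing arrows. Gluing: $B\subseteq A$ generated by $e_1+e_n$, the other vertex idempotents and all arrows; $B\cong kQ_B/I_B$ with $Q_B$ obtained by identifying $e_1,e_n$ (arrow $\alpha\mapsto\alpha^*$) and $I_B$ generated by the relations of $Z_A$ together with all newly formed length-2 paths through the identified vertex; $Z_B$ the resulting minimal relation set and $\mathcal B_B$ the basis paths of $B$. For path sets $X,Y$, $k(X\|Y)$ has basis the pairs $x\|y$ of parallel paths. For monomial $\Lambda=kQ/\langle Z\rangle$ with basis paths $\mathcal B$, $\delta^1:k(Q_1\|\mathcal B)\to k(Z\|\mathcal B)$, $a\|\gamma\mapsto\sum_{r\in Z}r\|r^{a\|\gamma}$, where $r^{a\|\gamma}$ is the sum over occurrences of $a$ in $r$ of the path obtained by replacing that occurrence by $\gamma$, keeping only paths in $\mathcal B$. $\mathrm{Ker}\,\delta^1$ is a Lie algebra with bracket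 $[a\|\gamma,b\|\epsilon]=b\|\epsilon^{a\|\gamma}-a\|\gamma^{b\|\epsilon}$. $\delta^1_A,\delta^1_B$ denote these for $A,B$. *)

From HB Require Import structures.
From mathcomp Require Import all_boot all_order all_algebra.
Set Implicit Arguments. Unset Strict Implicit. Unset Printing Implicit Defensive.
Import GRing.Theory.
Local Open Scope ring_scope.

(* A nontrivial path is a nonempty
   composable sequence of arrows, written in traversal order.  A trivial path
   e_v is represented by [::]; we only ever use trivial paths as paths parallel
   to a given nonempty path, which fixes the vertex v. *)

Definition composable (V E : finType) (s t : E -> V) (p : seq E) : bool :=
  sorted (fun a b => t a == s b) p.

Definition par (V E : finType) (s t : E -> V) (r g : seq E) : bool :=
  match r, g with
  | x :: r', y :: g' => [&& composable s t g, s y == s x & t (last y g') == t (last x r')]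
  | x :: r', [::] => s x == t (last x r')
  | [::], _ => false
  end.

(* the path g lies in the basis B = paths avoiding elements of Z as subpaths *)
Definition inB (E : finType) (Z : seq (seq E)) (g : seq E) : bool :=
  ~~ has (fun z => infix z g) Z.

(* a || g is a basis element of k(Q_1 || B) *)
Definition pb (V E : finType) (s t : E -> V) (Z : seq (seq E)) (a : E) (g : seq E) : bool :=
  par s t [:: a] g && inB Z g.

Definition monomial_rels (V E : finType) (s t : E -> V) (Z : seq (seq E)) : Prop :=
  forall z, z \in Z -> composable s t z /\ (2 <= size z)%N.
Definition minimal_rels (E : finType) (Z : seq (seq E)) : Prop :=
  forall z z', z \in Z -> z' \in Z -> infix z z' -> z = z'.
(* admissible: J^N is contained in <Z> for some N, i.e. every path of length N
   contains an element of Z as a subpath (J^2 contains <Z> since size z >= 2) *)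
Definition admissible (V E : finType) (s t : E -> V) (Z : seq (seq E)) : Prop :=
  exists N : nat, forall p : seq E, composable s t p -> size p = N ->
    has (fun z => infix z p) Z.

Definition is_source (V E : finType) (s t : E -> V) (v : V) : Prop := forall a, t a <> v.
Definition is_sink (V E : finType) (s t : E -> V) (v : V) : Prop := forall a, s a <> v.

Fixpoint allseqs (E : finType) (n : nat) : seq (seq E) :=
  match n with
  | 0 => [:: [::]]
  | n'.+1 => [::] :: [seq a :: p | a <- enum E, p <- allseqs E n']
  end.

Definition occ (E : finType) (r : seq E) (a : E) (g rho : seq E) : nat :=
  count (fun i => (nth a r i == a) && (take i r ++ g ++ drop i.+1 r == rho))
        (iota 0 (size r)).

(* Elements of k(Q_1 || B) are represented as functions f : E -> seq E -> k
   (f a g = coefficient of a||g) vanishing outside the basis pairs. *)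
Definition supported (k : fieldType) (V E : finType) (s t : E -> V) (Z : seq (seq E))
    (f : E -> seq E -> k) : Prop :=
  forall a g, ~~ pb s t Z a g -> f a g = 0.

(* coefficient of rho in  sum_{a||g} f(a||g) e^{a||g}; only g with
   size g <= size rho can contribute (e is nonempty when it matters). *)
Definition subst_coef (k : fieldType) (V E : finType) (s t : E -> V) (Z : seq (seq E))
    (f : E -> seq E -> k) (e rho : seq E) : k :=
  \sum_(a : E) \sum_(g <- allseqs E (size rho) | pb s t Z a g) f a g * (occ e a g rho)%:R.

(* delta^1(f) as a function on the basis pairs r || rho of k(Z || B):
   the coefficient of r || rho. *)
Definition delta1 (k : fieldType) (V E : finType) (s t : E -> V) (Z : seq (seq E))
    (f : E -> seq E -> k) (r rho : seq E) : k :=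
  subst_coef s t Z f r rho.

Definition kerd1 (k : fieldType) (V E : finType) (s t : E -> V) (Z : seq (seq E))
    (f : E -> seq E -> k) : Prop :=
  supported s t Z f /\
  (forall r rho, r \in Z -> par s t r rho -> inB Z rho -> delta1 s t Z f r rho = 0).

(* Lie bracket, bilinear extension of
   [a||g, b||e] = b||e^{a||g} - a||g^{b||e} *)
Definition bracket (k : fieldType) (V E : finType) (s t : E -> V) (Z : seq (seq E))
    (f h : E -> seq E -> k) : E -> seq E -> k :=
  fun c rho =>
    if pb s t Z c rho then
      \sum_(e <- allseqs E (size rho).+1 | pb s t Z c e)
        (h c e * subst_coef s t Z f e rho - f c e * subst_coef s t Z h e rho)
    else 0.

(* Lie algebra isomorphism Ker delta^1 (first) ~= Ker delta^1 (second);
   both quivers have the same arrow type E. *)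
Definition lie_iso (k : fieldType) (V1 V2 E : finType)
    (s1 t1 : E -> V1) (Z1 : seq (seq E)) (s2 t2 : E -> V2) (Z2 : seq (seq E)) : Prop :=
  exists phi : (E -> seq E -> k) -> (E -> seq E -> k),
    (forall f, kerd1 s1 t1 Z1 f -> kerd1 s2 t2 Z2 (phi f)) /\
        (forall f h, kerd1 s1 t1 Z1 f -> kerd1 s1 t1 Z1 h ->
          phi (fun a g => f a g + h a g) = (fun a g => phi f a g + phi h a g)) /\
        (forall (c : k) f, kerd1 s1 t1 Z1 f ->
          phi (fun a g => c * f a g) = (fun a g => c * phi f a g)) /\
        (forall f h, kerd1 s1 t1 Z1 f -> kerd1 s1 t1 Z1 h -> phi f = phi h -> f = h) /\
        (forall h, kerd1 s2 t2 Z2 h -> exists2 f, kerd1 s1 t1 Z1 f & phi f = h) /\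
        (forall f h, kerd1 s1 t1 Z1 f -> kerd1 s1 t1 Z1 h ->
          phi (bracket s1 t1 Z1 f h) = bracket s2 t2 Z2 (phi f) (phi h)).

(* vertices of Q_B: those of Q_A with e_n removed, e_n being identified with e_1 *)
Definition glueV (V : finType) (en : V) : finType := {v : V | v != en}.

Definition glue_map (V : finType) (e1 en : V) (H : e1 != en) (v : V) : glueV en :=
  insubd (exist (fun x => x != en) e1 H) v.

Definition minimalize (E : finType) (Z : seq (seq E)) : seq (seq E) :=
  [seq z <- undup Z | ~~ has (fun z' => (z' != z) && infix z' z) Z].

(* Z_B: minimal set of relations generating I_B, which is generated by Z_A and
   all length-2 paths a b of Q_B that are newly formed (not paths of Q_A). *)
Definition glue_rels (V E : finType) (s t : E -> V) (Z : seq (seq E))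
    (e1 en : V) (H : e1 != en) : seq (seq E) :=
  minimalize (Z ++ [seq p <- [seq [:: a; b] | a <- enum E, b <- enum E] |
     if p is [:: a; b] then (glue_map H (t a) == glue_map H (s b)) && (t a != s b)
     else false]).

(* The block (connected component) of kQ/<Z> containing the vertex v is
   isomorphic to k[x]/(x^2): the component is v with a single loop x,
   and x^2 lies in the ideal <Z>. *)
Definition dual_numbers_block (V E : finType) (s t : E -> V) (Z : seq (seq E)) (v : V) : Prop :=
  exists x : E, [/\ s x = v, t x = v,
    forall y, s y = v \/ t y = v -> y = x
  & has (fun z => infix z [:: x; x]) Z].

From HB Require Import structures.
From mathcomp Require Import all_boot all_order all_algebra zify.
From Stdlib Require Import FunctionalExtensionality.
Set Implicit Arguments. Unset Strict Implicit. Unset Printing Implicit Defensive.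
Import GRing.Theory.
Local Open Scope ring_scope.

(* Gluing adds to the relations exactly the paths b c with t b = e_n and
   s c = e_1, and to the basis pairs exactly the pairs a || e_1 for the arrows
   a : e_1 -> e_n, which become loops; so the identity on coefficient functions
   is the isomorphism.  A cocycle of A is a cocycle of B because no basis path
   of A passes through the glued vertex, so substituting into a new relation
   b c never yields a basis path.  Conversely a cocycle h of B vanishes on
   a || e_1: the new relation a c (resp. b a), for another arrow c out of e_1
   (resp. b into e_n), gives h (a || e_1) = 0 directly, and when there is no such
   arrow, a is alone in its block k[a]/(a^2) and the relation a a only gives
   2 h (a || e_1) = 0.  The brackets agree since both are computed from the
   same substitutions. *)

Section MonomialAlgebra.
Variables (k : fieldType) (V E : finType) (s t : E -> V) (Z : seq (seq E)).
Implicit Types (f h : E -> seq E -> k) (a b c x y z : E) (e g p r rho : seq E).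

Definition subst_sum f e rho : k :=
  \sum_(a : E) \sum_(g <- allseqs E (size rho)) f a g * (occ e a g rho)%:R.

Lemma subst_coefE f e rho :
  supported s t Z f -> subst_coef s t Z f e rho = subst_sum f e rho.
Proof.
move=> suppf; apply: eq_bigr => a _; rewrite big_mkcond; apply: eq_bigr => g _.
by case: ifP => // /negbT/suppf ->; rewrite mul0r.
Qed.

Lemma subst_sum_eq0 f e rho :
  (forall a g, g \in allseqs E (size rho) -> f a g != 0 -> occ e a g rho = 0%N) ->
  subst_sum f e rho = 0.
Proof.
move=> occ0; rewrite /subst_sum big1 // => a _; rewrite big1_seq // => g /andP[_ g_in].
by have [->|/(occ0 a g g_in) ->] := eqVneq (f a g) 0; rewrite ?mul0r ?mulr0.
Qed.

Lemma occ_size r a g rho : occ r a g rho != 0%N -> (size rho + 1 = size r + size g)%N.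
Proof.
rewrite /occ -lt0n -has_count => /hasP[i]; rewrite mem_iota add0n => /andP[_ ilt].
move=> /andP[_ /eqP <-]; rewrite !size_cat size_take size_drop ilt; lia.
Qed.

Lemma occ_pair x y a g rho :
  occ [:: x; y] a g rho =
    (((x == a) && (g ++ [:: y] == rho)) + ((y == a) && (x :: g == rho)))%N.
Proof. by rewrite /occ /= cats0 addn0. Qed.

Lemma occ_nil e a : occ e a [::] [::] != 0%N -> e = [:: a].
Proof.
move=> occ_neq0; have := occ_size occ_neq0.
case: e occ_neq0 => [|x [|y e]] //= + _.
by rewrite /occ /= addn0 andbT; case: (x =P a) => [->|].
Qed.

Lemma big_allseqs_nil n (F : E -> seq E -> k) a :
  (forall a' g, (a' != a) || (g != [::]) -> F a' g = 0) ->
  \sum_(a' : E) \sum_(g <- allseqs E n) F a' g = F a [::].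
Proof.
move=> F0; rewrite (bigD1 a) //= [X in _ + X]big1 ?addr0; last first.
  by move=> a' a'a; rewrite big1 // => g _; rewrite F0 ?a'a.
case: n => [|n] /=; first by rewrite big_seq1.
rewrite big_cons big1_seq ?addr0 // => g /andP[_ /allpairsP[[x p] [_ _ ->]]].
by rewrite F0 ?orbT.
Qed.

Lemma subst_sum_pair1 f x y z :
  subst_sum f [:: x; y] [:: z] = f x [::] * (y == z)%:R + f y [::] * (x == z)%:R.
Proof.
rewrite /subst_sum.
under eq_bigr do under eq_bigr do rewrite occ_pair natrD mulrDr.
under eq_bigr do rewrite big_split.
rewrite big_split (@big_allseqs_nil _ _ x) ?(@big_allseqs_nil _ _ y)
  ?eqxx ?eqseq_cons ?eqxx ?andbT //.
all: move=> a [|w [|w' g]] /=; rewrite -?eqseqE /= ?andbF ?mulr0n ?mulr0 // orbF.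
all: by rewrite eq_sym => /negPf ->; rewrite mulr0n mulr0.
Qed.

Lemma par_composable r g : par s t r g -> composable s t g.
Proof. by case: r g => [|x r] [|y g] //= /and3P[]. Qed.

Lemma inB_cons x p : inB Z (x :: p) -> inB Z p.
Proof.
apply: contra => /hasP[z zZ /infix_trans inf_z]; apply/hasP; exists z => //.
exact/inf_z/infix_cons.
Qed.

Lemma inB_short g :
  (forall r, r \in Z -> 2 <= size r)%N -> (size g <= 1)%N -> inB Z g.
Proof.
move=> Zsize gsize; apply/hasPn => r /Zsize rsize; apply/negP => /size_infix.
by move=> /(leq_trans rsize); rewrite ltnNge gsize.
Qed.

Lemma kerd1_pair1 f x y z :
  kerd1 s t Z f -> [:: x; y] \in Z -> par s t [:: x; y] [:: z] -> inB Z [:: z] ->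
  f x [::] * (y == z)%:R + f y [::] * (x == z)%:R = 0.
Proof.
by case=> suppf kerf xyZ par_z inBz; rewrite -subst_sum_pair1 -subst_coefE //; apply: kerf.
Qed.

Lemma bracket_supportedE f h c rho :
  supported s t Z f -> supported s t Z h ->
  bracket s t Z f h c rho =
    if pb s t Z c rho then
      \sum_(e <- allseqs E (size rho).+1)
        (h c e * subst_sum f e rho - f c e * subst_sum h e rho)
    else 0.
Proof.
move=> suppf supph; rewrite /bracket; case: ifP => // _.
rewrite big_mkcond; apply: eq_bigr => e _; case: ifP => [_|/negbT pce].
  by rewrite !subst_coefE.
by rewrite suppf // supph // !mul0r subrr.
Qed.

Lemma mem_minimalize (W : seq (seq E)) r :
  (forall r r', r \in W -> r' \in W -> infix r' r -> r' = r) ->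
  (r \in minimalize W) = (r \in W).
Proof.
move=> Wmin; rewrite mem_filter mem_undup andb_idl // => rW.
by apply/hasPn => r' r'W; apply/andP => -[/eqP r'_neq /(Wmin _ _ rW r'W)].
Qed.

End MonomialAlgebra.

Section Gluing.
Variables (k : fieldType) (V E : finType) (s t : E -> V) (Z : seq (seq E)).
Variables (e1 en : V) (Hne : e1 != en).
Hypotheses (Zmono : monomial_rels s t Z) (Zmin : minimal_rels Z).
Hypotheses (e1_source : is_source s t e1) (en_sink : is_sink s t en).
Implicit Types (f h : E -> seq E -> k) (a b c x : E) (g p r rho : seq E).

Local Notation glue := (glue_map Hne).
Local Notation sB := (fun a => glue (s a)).
Local Notation tB := (fun a => glue (t a)).
Local Notation ZB := (glue_rels s t Z Hne).

Definition glued_pair p : bool :=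
  if p is [:: b; c] then (t b == en) && (s c == e1) else false.

Lemma glue_mapE v : val (glue v) = if v == en then e1 else v.
Proof.
rewrite /glue_map /insubd; case: insubP => /= [u u_neq ->|/negPn/eqP ->].
  by rewrite (negPf u_neq).
by rewrite eqxx.
Qed.

Lemma glue_src a : val (glue (s a)) = s a.
Proof. by rewrite glue_mapE; case: eqP => // /en_sink. Qed.

Lemma glue_src_eq a b : (glue (s a) == glue (s b)) = (s a == s b).
Proof. by rewrite -val_eqE /= !glue_src. Qed.

Lemma glue_tgt_eq a b : (glue (t a) == glue (t b)) = (t a == t b).
Proof.
rewrite -val_eqE /= !glue_mapE.
have tgt_neq_e1 x : (e1 == t x) = false by apply/eqP => /esym/e1_source.
case: (t a =P en) => [->|/eqP ta]; case: (t b =P en) => [->|/eqP tb]; rewrite ?eqxx //.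
  by rewrite tgt_neq_e1 eq_sym (negPf tb).
by rewrite eq_sym tgt_neq_e1 (negPf ta).
Qed.

Lemma glue_tgt_src a b :
  (glue (t a) == glue (s b)) = (t a == s b) || ((t a == en) && (s b == e1)).
Proof.
rewrite -val_eqE glue_src /= glue_mapE; case: (t a =P en) => [->|_] /=; last by rewrite orbF.
by rewrite eq_sym; case: (en =P s b) => // /esym/en_sink.
Qed.

Lemma glued_pair_size p : glued_pair p -> size p = 2.
Proof. by case: p => [|? [|? []]]. Qed.

Lemma mem_glue_rels r : (r \in ZB) = (r \in Z) || glued_pair r.
Proof.
rewrite /glue_rels; set NL := (X in Z ++ X).
have memNL p : (p \in NL) = glued_pair p.
  apply/idP/idP.
    rewrite mem_filter => /andP[+ /allpairsP[[b c] [_ _ /= p_eq]]].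
    by rewrite p_eq glue_tgt_src; case: (t b =P s c) => //= _; rewrite andbT.
  case: p => [|b [|c []]] //= /andP[/eqP tb /eqP sc].
  rewrite mem_filter glue_tgt_src tb sc !eqxx orbT eq_sym Hne /=.
  by apply/allpairsP; exists (b, c); rewrite !mem_enum.
have size_ge2 p : (p \in Z) || glued_pair p -> (2 <= size p)%N.
  by case/orP => [/Zmono[] // | /glued_pair_size ->].
have W_min r1 r2 : r1 \in Z ++ NL -> r2 \in Z ++ NL -> infix r2 r1 -> r2 = r1.
  rewrite !mem_cat !memNL => r1W r2W r2r1.
  case/orP: r1W => [r1Z | /glued_pair_size r1_size].
    case/orP: r2W => [r2Z | ]; first exact: Zmin r2Z r1Z r2r1.
    have := infix_sorted r2r1 (Zmono r1Z).1.
    case: r2 {r2r1} => [|b [|c []]] //= /andP[/eqP tbsc _] /andP[/eqP tb /eqP sc].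
    by case/eqP: Hne; rewrite -sc -tbsc tb.
  apply/eqP; rewrite -(size_subseq_leqif (infixW r2r1)).2 eqn_leq size_infix // r1_size.
  exact: size_ge2.
by rewrite mem_minimalize // mem_cat memNL.
Qed.

Lemma glue_rels_size r : r \in ZB -> (2 <= size r)%N.
Proof. by rewrite mem_glue_rels => /orP[/Zmono[] // | /glued_pair_size ->]. Qed.

Lemma glued_pair_rels b c : t b = en -> s c = e1 -> [:: b; c] \in ZB.
Proof. by move=> tb sc; rewrite mem_glue_rels /= tb sc !eqxx orbT. Qed.

Lemma composable_glue p : composable s t p -> composable sB tB p.
Proof. by apply: sub_sorted => a b /eqP tab; rewrite tab. Qed.

Lemma composable_unglue p : composable sB tB p -> inB ZB p -> composable s t p.
Proof.
elim: p => [|x [|y p] IH] // /andP[xy yp] inBxyp.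
apply/andP; split; last exact: IH yp (inB_cons inBxyp).
move: xy; rewrite glue_tgt_src => /orP[// | /andP[/eqP tx /eqP sy]].
case/negP: inBxyp; apply/hasP; exists [:: x; y]; first exact: glued_pair_rels.
exact: (prefix_infix [:: x; y] p).
Qed.

Lemma inB_unglue g : inB ZB g -> inB Z g.
Proof.
apply: contra => /hasP[r rZ rg]; apply/hasP; exists r => //.
by rewrite mem_glue_rels rZ.
Qed.

Lemma inB_glue g : composable s t g -> inB Z g -> inB ZB g.
Proof.
move=> g_comp /hasPn inBg; apply/hasPn => r; rewrite mem_glue_rels => /orP[/inBg // | ].
case: r => [|b [|c []]] //= /andP[/eqP tb /eqP sc]; apply/negP => /infix_sorted.
by move=> /(_ _ g_comp) /=; rewrite tb sc eq_sym (negPf Hne).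
Qed.

Lemma inB_nil : inB Z [::].
Proof. by apply: inB_short => // r /Zmono[]. Qed.

Lemma inB_glue_rels1 x : inB ZB [:: x].
Proof. exact: inB_short glue_rels_size _. Qed.

Lemma par_glue r g : par s t r g -> par sB tB r g.
Proof.
case: r g => [|x r] [|y g] //= => [/eqP -> // | /and3P[yg sy ty]].
by rewrite glue_src_eq glue_tgt_eq sy ty /= andbT; apply: (@composable_glue (y :: g)).
Qed.

Lemma par_unglue r g : g != [::] -> par sB tB r g -> inB ZB g -> par s t r g.
Proof.
case: r g => [|x r] [|y g] //= _ /and3P[yg sy ty] inBg.
by rewrite -glue_src_eq -glue_tgt_eq sy ty /= andbT; apply: (@composable_unglue (y :: g)).
Qed.

Lemma pb_glue a g : pb s t Z a g -> pb sB tB ZB a g.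
Proof.
by case/andP=> par_ag inBg; rewrite /pb par_glue // inB_glue // (par_composable par_ag).
Qed.

Lemma pb_unglue a g :
  pb sB tB ZB a g -> pb s t Z a g \/ [/\ g = [::], s a = e1 & t a = en].
Proof.
case: g => [|y g] /andP[par_ag inBg].
  move: par_ag; rewrite /= eq_sym glue_tgt_src => /orP[sa_ta | /andP[/eqP ta /eqP sa]].
    by left; rewrite /pb /= eq_sym sa_ta inB_nil.
  by right.
by left; rewrite /pb par_unglue // inB_unglue.
Qed.

Lemma supported_glue f : supported s t Z f -> supported sB tB ZB f.
Proof. by move=> suppf a g not_pbB; apply: suppf; apply: contra not_pbB; apply: pb_glue. Qed.

Lemma subst_sum_glued_pair_eq0 f b c rho :
  supported s t Z f -> t b = en -> s c = e1 -> composable s t rho ->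
  subst_sum f [:: b; c] rho = 0.
Proof.
move=> suppf tb sc rho_comp; apply: subst_sum_eq0 => a g _ fag.
have /andP[par_ag _] : pb s t Z a g by apply: contraNT fag => /suppf/eqP.
rewrite occ_pair; case: g fag par_ag => [|y g] _ /= par_ag.
  have ba : b != a by apply: contraTneq par_ag => <-; rewrite tb; apply/eqP/en_sink.
  have ca : c != a by apply: contraTneq par_ag => <-; rewrite sc eq_sym; apply/eqP/e1_source.
  by rewrite (negPf ba) (negPf ca).
case/and3P: par_ag => _ /eqP sy /eqP ty.
have -> : (b == a) && (y :: g ++ [:: c] == rho) = false.
  apply/negbTE/andP => -[/eqP ba /eqP rho_eq]; move: rho_comp.
  rewrite -rho_eq /composable /= cat_path /= andbT => /andP[_ /eqP].
  by rewrite ty -ba tb sc => /esym/eqP; rewrite (negPf Hne).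
have -> : (c == a) && (b :: y :: g == rho) = false.
  apply/negbTE/andP => -[/eqP ca /eqP rho_eq]; move: rho_comp.
  by rewrite -rho_eq => /andP[/eqP]; rewrite sy -ca tb sc => /esym/eqP; rewrite (negPf Hne).
by [].
Qed.

Lemma kerd1_glue f : kerd1 s t Z f -> kerd1 sB tB ZB f.
Proof.
case=> suppf kerf; split; first exact: supported_glue.
move=> r rho; rewrite mem_glue_rels => /orP[rZ | r_new] par_rho inB_rho;
  rewrite /delta1 (subst_coefE _ _ (supported_glue suppf)).
  case: rho par_rho inB_rho => [|y rho] par_rho inB_rho.
    apply: subst_sum_eq0 => a g _ _; apply/eqP; apply: contraTT (Zmono rZ).2.
    by move=> /occ_size /= sizes; rewrite -ltnNge ltnS add0n in sizes *; rewrite sizes leq_addr.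
  rewrite -(subst_coefE _ _ suppf); apply: kerf => //; first exact: par_unglue.
  exact: inB_unglue.
case: r r_new par_rho => [|b [|c []]] // /andP[/eqP tb /eqP sc] par_rho.
apply: subst_sum_glued_pair_eq0 => //.
exact: composable_unglue (par_composable par_rho) inB_rho.
Qed.

Lemma glue_dual_numbers_block a :
  s a = e1 -> t a = en -> (forall b, s b = e1 \/ t b = en -> b = a) ->
  dual_numbers_block sB tB ZB (glue e1).
Proof.
move=> sa ta only_a.
have glue_e1 : val (glue e1) = e1 by rewrite glue_mapE; case: ifP.
exists a; split.
- by rewrite sa.
- by apply: val_inj; rewrite glue_e1 glue_mapE ta eqxx.
- move=> b [/(congr1 val) | /(congr1 val)].
    by rewrite glue_e1 glue_src => sb; apply: only_a; left.
  rewrite glue_e1 glue_mapE; case: (t b =P en) => [tb _ | _ /e1_source //].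
  by apply: only_a; right.
- by apply/hasP; exists [:: a; a]; [exact: glued_pair_rels | exact: infix_refl].
Qed.

Lemma bracket_glue f h :
  supported s t Z f -> supported s t Z h -> bracket s t Z f h = bracket sB tB ZB f h.
Proof.
move=> suppf supph; apply: functional_extensionality => c.
apply: functional_extensionality => rho.
rewrite (bracket_supportedE _ _ suppf supph).
rewrite (bracket_supportedE _ _ (supported_glue suppf) (supported_glue supph)).
have [pbA | not_pbA] := boolP (pb s t Z c rho); first by rewrite pb_glue.
case: ifP => // /pb_unglue[pbA | [rho0 sc tc]]; first by rewrite pbA in not_pbA.
rewrite rho0; symmetry; apply: big1 => e _.
suff subst_nil_eq0 f' h' : supported s t Z f' -> supported s t Z h' ->
    h' c e * subst_sum f' e [::] = 0 by rewrite !subst_nil_eq0 // subrr.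
move=> suppf' supph'; have [pce | /supph' ->] := boolP (pb s t Z c e); last by rewrite mul0r.
rewrite subst_sum_eq0 ?mulr0 // => a g; rewrite inE => /eqP -> f'a0.
have /andP[/eqP saa _] : pb s t Z a [::] by apply: contraNT f'a0 => /suppf'/eqP.
apply/eqP; apply: contraTT isT => /occ_nil e_a.
move: pce; rewrite e_a => /andP[/and3P[_ /eqP sac /eqP tac] _].
by case/eqP: Hne; rewrite -sc -sac saa tac tc.
Qed.

Hypothesis not_dual_numbers :
  ~ ((2%N \in [pchar k]) /\ dual_numbers_block sB tB ZB (glue e1)).

Lemma kerd1_glue_loop_eq0 h a :
  kerd1 sB tB ZB h -> s a = e1 -> t a = en -> h a [::] = 0.
Proof.
move=> kerh sa ta.
have pair_eq0 x y z : [:: x; y] \in ZB -> par sB tB [:: x; y] [:: z] ->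
    h x [::] * (y == z)%:R + h y [::] * (x == z)%:R = 0.
  by move=> xyZ par_z; apply: kerd1_pair1 kerh xyZ par_z (inB_glue_rels1 z).
have [c /andP[/eqP sc ca] | no_c] := pickP (fun c => (s c == e1) && (c != a)).
  have := pair_eq0 a c c (glued_pair_rels ta sc).
  rewrite eqxx eq_sym (negPf ca) mulr1 mulr0 addr0; apply.
  by rewrite /= glue_src_eq sc sa !eqxx.
have [b /andP[/eqP tb ba] | no_b] := pickP (fun b => (t b == en) && (b != a)).
  have := pair_eq0 b a b (glued_pair_rels tb sa).
  rewrite eqxx eq_sym (negPf ba) mulr1 mulr0 add0r; apply.
  by rewrite /= glue_tgt_eq tb ta !eqxx.
have par_aa : par sB tB [:: a; a] [:: a] by rewrite /= glue_src_eq glue_tgt_eq !eqxx.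
have /eqP := pair_eq0 a a a (glued_pair_rels ta sa) par_aa.
rewrite eqxx -mulrDr -natrD mulf_eq0 => /orP[/eqP // | two0].
case: not_dual_numbers; split; first by rewrite inE /= two0.
apply: glue_dual_numbers_block sa ta _ => b [sb | tb].
  by apply/eqP; move/negbT: (no_c b); rewrite sb eqxx negbK.
by apply/eqP; move/negbT: (no_b b); rewrite tb eqxx negbK.
Qed.

Lemma kerd1_unglue h : kerd1 sB tB ZB h -> kerd1 s t Z h.
Proof.
move=> kerh; case: (kerh) => supphB kerhB.
have supph : supported s t Z h.
  move=> a g not_pbA.
  have [/pb_unglue[pbA | [-> sa ta]] | /supphB //] := boolP (pb sB tB ZB a g).
    by rewrite pbA in not_pbA.
  exact: kerd1_glue_loop_eq0.
split=> // r rho rZ par_rho inB_rho.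
rewrite /delta1 (subst_coefE _ _ supph) -(subst_coefE _ _ supphB).
apply: kerhB; first by rewrite mem_glue_rels rZ.
  exact: par_glue.
exact: inB_glue (par_composable par_rho) inB_rho.
Qed.

End Gluing.

Theorem corollary3p18 (k : fieldType) (V E : finType) (s t : E -> V)
    (Z : seq (seq E)) (e1 en : V) (Hne : e1 != en) :
  monomial_rels s t Z -> minimal_rels Z -> admissible s t Z ->
  is_source s t e1 -> is_sink s t en ->
  (exists a, s a = e1) -> (exists a, t a = en) ->
  ~ ((2%N \in [pchar k]) /\
     dual_numbers_block (fun a => glue_map Hne (s a)) (fun a => glue_map Hne (t a))
       (glue_rels s t Z Hne) (glue_map Hne e1)) ->
  @lie_iso k V (glueV en) E s t Z
    (fun a => glue_map Hne (s a)) (fun a => glue_map Hne (t a)) (glue_rels s t Z Hne).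
Proof.
move=> Zmono Zmin _ e1_source en_sink _ _ not_dual_numbers.
exists id; split; [|split; [|split; [|split; [|split]]]] => //.
- by move=> f; apply: kerd1_glue.
- by move=> h kerh; exists h => //; apply: kerd1_unglue kerh.
- by move=> f h [suppf _] [supph _]; apply: bracket_glue.
Qed.
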